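(* Let $\bm{A}=[\bm{A}_1\ \bm{A}_2]$ have full column rank with $\bm{A}_j^\top\bm{A}_j=\bm{I}_j$ and $\bm{C}:=\bm{A}_2^\top\bm{A}_1\ne0$. Let $\gamma_1^*:=\dfrac{2}{1+\sqrt{1-\lambda_1(\bm{C}\bm{C}^\top)}}$. Then $\gamma_1^*-1<\rho(\bm{M}(1,1))$ and $\min_{\gamma_1>0}\rho(\bm{M}(\gamma_1,\gamma_1))=\rho(\bm{M}(\gamma_1^*,\gamma_1^* ))=\gamma_1^*-1.$
   Context: $\rho$: spectral radius; $\lambda_1$: largest eigenvalue. $\bm{M}(\gamma_1,\gamma_2)=\begin{bmatrix}(1-\gamma_1)\bm{I}_1&-\gamma_1\bm{C}^\top\\-\gamma_2(1-\gamma_1)\bm{C}&(1-\gamma_2)\bm{I}_2+\gamma_1\gamma_2\bm{C}\bm{C}^\top\end{bmatrix}$, the two-block gradient descent iteration matrix with stepsizes $\gamma_1,\gamma_2$. *)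

From HB Require Import structures.
From mathcomp Require Import all_boot all_order all_algebra.
From mathcomp Require Import complex.
From mathcomp Require Import classical_sets reals.

Set Implicit Arguments.
Unset Strict Implicit.
Unset Printing Implicit Defensive.

Import Order.TTheory GRing.Theory Num.Theory.
Local Open Scope ring_scope.
Local Open Scope classical_set_scope.

Definition cmod (R : realType) (z : R[i]) : R :=
  let: Complex a b := z in Num.sqrt (a ^+ 2 + b ^+ 2).

Definition ceigenvalue (R : realType) (n : nat) (M : 'M[R]_n) (z : R[i]) : Prop :=
  eigenvalue (map_mx (real_complex R) M) z.

Definition spectral_radius (R : realType) (n : nat) (M : 'M[R]_n) : R :=
  sup [set cmod z | z in [set z : R[i] | ceigenvalue M z]].

Definition lambda_max (R : realType) (n : nat) (S : 'M[R]_n) : R :=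
  sup [set a : R | eigenvalue S a].

Definition gd_iter_mx (R : realType) (n1 n2 : nat) (C : 'M[R]_(n2, n1)) (g1 g2 : R)
  : 'M[R]_(n1 + n2) :=
  block_mx ((1 - g1)%:M) (- g1 *: C^T)
           (- (g2 * (1 - g1)) *: C) ((1 - g2)%:M + (g1 * g2) *: (C *m C^T)).
Arguments gd_iter_mx {R n1 n2} C g1 g2.
Arguments spectral_radius {R n} M.
Arguments lambda_max {R n} S.

From HB Require Import structures.
From mathcomp Require Import all_boot all_order all_algebra.
From mathcomp Require Import complex.
From mathcomp Require Import boolp classical_sets reals.
From mathcomp Require Import ring lra.
Import Order.TTheory GRing.Theory Num.Theory.
Set Implicit Arguments.
Unset Strict Implicit.
Unset Printing Implicit Defensive.
Local Open Scope ring_scope.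

(* A nonzero eigenvalue [z] of [M(g, g)] with [z <> 1 - g] comes from an eigenvalue
   [nu] of [C C^T] through [(z + g - 1)^2 = g^2 z nu], and conversely.  The [nu] are
   real, lie in [[0, lambda_1]], and [0 < lambda_1 < 1] by orthonormality and full
   rank of [[A1 A2]].  The step [w := gamma_1^*] is the one for which
   [w^2 lambda_1 = 4 (w - 1)]: for [g = w] and every [nu] in [[0, lambda_1]] the
   quadratic has a nonpositive discriminant, so both its roots have modulus [w - 1];
   for any other [g > 0] the quadratic with [nu = lambda_1] still has a root of
   modulus at least [w - 1].  Finally [lambda_1 > w - 1] is itself an eigenvalue of
   [M(1, 1)]. *)

Lemma eigenvalue_trmx (F : fieldType) n (A : 'M[F]_n) a :
  eigenvalue A^T a = eigenvalue A a.
Proof.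
rewrite !eigenvalue_root_char /char_poly -det_tr /char_poly_mx.
by rewrite linearB /= tr_scalar_mx map_trmx trmxK.
Qed.

Lemma mxtrace_char_poly_roots (F : fieldType) n (A : 'M[F]_n) (s : seq F) :
  char_poly A = \prod_(z <- s) ('X - z%:P) -> \tr A = \sum_(z <- s) z.
Proof.
move=> charA; have sizes : size s = n.
  by apply: succn_inj; rewrite -(size_char_poly A) charA size_prod_XsubC.
case: n A charA sizes => [|n] A charA sizes.
  by case: s charA sizes => // _ _; rewrite big_nil /mxtrace big_ord0.
apply: oppr_inj; rewrite -char_poly_trace // charA.
by rewrite -coefPn_prod_XsubC sizes.
Qed.

Lemma eigenvalues_in_seq (K : closedFieldType) n (A : 'M[K]_n) :
  exists s : seq K, forall z, eigenvalue A z -> z \in s.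
Proof.
have [s Hs] := closed_field_poly_normal (char_poly A).
exists s => z; rewrite eigenvalue_root_char Hs (monicP (char_poly_monic A)).
by rewrite scale1r root_prod_XsubC.
Qed.

(* [gd_iter_mx] over an arbitrary field, so that it can be mapped to [R[i]]. *)
Definition gd_mx (F : fieldType) (n1 n2 : nat) (C : 'M[F]_(n2, n1)) (g1 g2 : F)
  : 'M[F]_(n1 + n2) :=
  block_mx ((1 - g1)%:M) (- g1 *: C^T)
           (- (g2 * (1 - g1)) *: C) ((1 - g2)%:M + (g1 * g2) *: (C *m C^T)).

Lemma map_gd_mx (F K : fieldType) (f : {rmorphism F -> K}) n1 n2
    (C : 'M[F]_(n2, n1)) g1 g2 :
  map_mx f (gd_mx C g1 g2) = gd_mx (map_mx f C) (f g1) (f g2).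
Proof.
rewrite /gd_mx map_block_mx !map_mxZ map_mxD !map_scalar_mx map_mxZ map_mxM.
by rewrite map_trmx !(rmorphB, rmorphN, rmorphM, rmorph1).
Qed.

Section GdEigen.
Variables (F : fieldType) (n1 n2 : nat) (C : 'M[F]_(n2, n1)).

Lemma mul_row_gd_mx_tr g (x : 'rV_n1) (y : 'rV_n2) :
  row_mx x y *m (gd_mx C g g)^T =
  row_mx ((1 - g) *: x - g *: (y *m C))
         (- (g * (1 - g)) *: (x *m C^T) + (1 - g) *: y
          + (g * g) *: (y *m C *m C^T)).
Proof.
rewrite /gd_mx tr_block_mx !tr_scalar_mx !linearZ /= trmxK linearD /= tr_scalar_mx.
rewrite linearZ /= trmx_mul trmxK mul_row_block !mul_mx_scalar mulmxDr.
rewrite mul_mx_scalar -!scalemxAr mulmxA scaleNr.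
by congr row_mx; rewrite ?scalerN ?addrA.
Qed.

Lemma gram_eigenvector nu :
  eigenvalue (C *m C^T) nu -> nu != 0 ->
  exists2 x : 'rV_n1, x != 0 & x *m C^T *m C = nu *: x.
Proof.
move=> /eigenvalueP [v Hv v0] nu0; exists (v *m C).
  apply: contraNneq v0 => vC0.
  have : nu *: v = 0 by rewrite -Hv mulmxA vC0 mul0mx.
  by move/eqP; rewrite scaler_eq0 (negPf nu0).
by rewrite -[v *m C *m C^T]mulmxA Hv -scalemxAl.
Qed.

Lemma gram_eigenvalue nu (x : 'rV_n1) :
  x != 0 -> x *m C^T *m C = nu *: x -> nu != 0 -> eigenvalue (C *m C^T) nu.
Proof.
move=> x0 Cx nu0; apply/eigenvalueP; exists (x *m C^T).
  by rewrite mulmxA Cx -scalemxAl.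
apply: contraNneq x0 => xC0.
have : nu *: x = 0 by rewrite -Cx xC0 mul0mx.
by move/eqP; rewrite scaler_eq0 (negPf nu0).
Qed.

Lemma eigenvalue_gd_mx g nu l (x : 'rV_n1) :
  x != 0 -> x *m C^T *m C = nu *: x -> g != 0 -> l != 0 -> nu != 0 ->
  (l + g - 1) ^+ 2 = g ^+ 2 * l * nu -> eigenvalue (gd_mx C g g) l.
Proof.
move=> x0 Cx g0 l0 nu0 lroot.
have d0 : l + g - 1 != 0 by rewrite -sqrf_eq0 lroot !mulf_neq0 // expf_neq0.
have nuE : nu = (l + g - 1) ^+ 2 / (g ^+ 2 * l).
  by rewrite lroot mulrC mulKf // mulf_neq0 // expf_neq0.
rewrite -eigenvalue_trmx; apply/eigenvalueP.
exists (row_mx x (- (g * l / (l + g - 1)) *: (x *m C^T))); last first.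
  by rewrite row_mx_eq0 negb_and x0.
rewrite mul_row_gd_mx_tr scale_row_mx; congr row_mx.
  rewrite -scalemxAl Cx !scalerA -scalerBl; congr (_ *: x).
  by rewrite nuE; field; rewrite d0 l0 g0.
rewrite -!scalemxAl Cx -scalemxAl !scalerA -!scalerDl; congr (_ *: _).
by rewrite nuE; field; rewrite d0 l0 g0.
Qed.

Lemma gd_mx_eigenvector g l :
  eigenvalue (gd_mx C g g) l -> g != 0 -> l != 0 -> l + g - 1 != 0 ->
  exists2 x : 'rV_n1, x != 0 &
     x *m C^T *m C = ((l + g - 1) ^+ 2 / (g ^+ 2 * l)) *: x.
Proof.
rewrite -eigenvalue_trmx => /eigenvalueP [v Hv v0] g0 l0 d0.
move: Hv v0; rewrite -[v]hsubmxK; set x := lsubmx v; set y := rsubmx v.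
rewrite mul_row_gd_mx_tr scale_row_mx => /eq_row_mx [E1 E2].
rewrite row_mx_eq0 negb_and; set d := l + g - 1 in d0 *.
have gyC : g *: (y *m C) = (1 - g - l) *: x.
  by rewrite scalerBl -E1 opprB addrC subrK.
have ggyCCt : (g * g) *: (y *m C *m C^T) = (g * (1 - g - l)) *: (x *m C^T).
  by rewrite -scalerA scalemxAl gyC -scalemxAl scalerA.
have dy : d *: y = - (g * l) *: (x *m C^T).
  rewrite (_ : d = l - (1 - g)); last by rewrite /d; ring.
  rewrite scalerBl -E2 ggyCCt addrAC addrK -scalerDl; congr (_ *: _); ring.
move=> v0; have x0 : x != 0.
  apply: contraTneq v0 => x0; rewrite x0 eqxx /= negbK.
  by move: dy; rewrite x0 mul0mx scaler0 => /eqP; rewrite scaler_eq0 (negPf d0).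
have CtCx : (g * - (g * l)) *: (x *m C^T *m C) = (d * (1 - g - l)) *: x.
  by rewrite -scalerA scalemxAl -dy -scalemxAl scalerA mulrC -scalerA -gyC scalerA.
exists x => //; apply: (scalerI (_ : g * - (g * l) != 0)).
  by rewrite mulf_neq0 // oppr_eq0 mulf_neq0.
by rewrite CtCx scalerA; congr (_ *: x); rewrite /d; field; rewrite g0 l0.
Qed.

End GdEigen.

Section RealSpectra.
Variable R : realType.
Local Open Scope classical_set_scope.
Local Open Scope complex_scope.

Lemma sup_finite (E : set R) (s : seq R) :
  E !=set0 -> (forall x, E x -> x \in s) -> E (sup E) /\ ubound E (sup E).
Proof.
move=> [x0 Ex0] Es; set m := \big[Order.max/x0]_(x <- s | `[< E x >]) x.
have Em : E m.
  apply: (big_ind E) => // [x y Ex Ey|x /asboolP //].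
  by rewrite /Order.max; case: ifP.
have ubm : ubound E m.
  by move=> x Ex; apply: (le_bigmax_seq x0 x _ id (Es _ Ex)); apply/asboolP.
suff -> : sup E = m by [].
apply/le_anti; rewrite ge_sup //=; last by exists x0.
by apply: sup_upper_bound => //; split; [exists x0 | exists m].
Qed.

Lemma cmod_real (x : R) : cmod x%:C = `|x|.
Proof. by rewrite /cmod /= expr0n addr0 sqrtr_sqr. Qed.

Lemma ceigenvalue_real n (M : 'M[R]_n) r : ceigenvalue M r%:C = eigenvalue M r.
Proof. by rewrite /ceigenvalue (eigenvalue_map (real_complex R)). Qed.

Lemma spectral_radius_is_max n (M : 'M[R]_n) z :
  ceigenvalue M z ->
  (exists2 w, ceigenvalue M w & spectral_radius M = cmod w) /\
  (forall w, ceigenvalue M w -> cmod w <= spectral_radius M).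
Proof.
move=> Mz; have [s Hs] := eigenvalues_in_seq (map_mx (real_complex R) M).
set E := [set cmod z | z in [set z | ceigenvalue M z]].
have [[w Mw wE] ub] : E (sup E) /\ ubound E (sup E).
  apply: (sup_finite (s := map (@cmod R) s)); first by exists (cmod z), z.
  by move=> _ [w Mw <-]; apply/map_f/Hs.
by split; [exists w => // | move=> w' Mw'; apply: ub; exists w'].
Qed.

Lemma lambda_max_is_max n (S : 'M[R]_n) r : eigenvalue S r ->
  eigenvalue S (lambda_max S) /\ forall r', eigenvalue S r' -> r' <= lambda_max S.
Proof.
move=> Sr; have [s Hs] := eigenvalues_in_seq (map_mx (real_complex R) S).
apply: sup_finite; first by exists r.
move=> x Sx; rewrite -[x]/(complex.Re x%:C); apply: map_f; apply: Hs.
by rewrite -/(ceigenvalue _ _) ceigenvalue_real.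
Qed.

End RealSpectra.

Section Gram.
Variable R : realType.
Local Open Scope complex_scope.

Definition cnorm2 n (u : 'rV[R[i]]_n) : R[i] := (u *m (map_mx conjc u)^T) 0 0.

Lemma cnorm2E n (u : 'rV[R[i]]_n) : cnorm2 u = \sum_j u 0 j * (u 0 j)^*.
Proof. by rewrite /cnorm2 !mxE; apply: eq_bigr => j _; rewrite !mxE. Qed.

Lemma cnorm2_ge0 n (u : 'rV[R[i]]_n) : 0 <= cnorm2 u.
Proof. by rewrite cnorm2E; apply: sumr_ge0 => j _; apply: mulcJ_ge0. Qed.

Lemma cnorm2_eq0 n (u : 'rV[R[i]]_n) : (cnorm2 u == 0) = (u == 0).
Proof.
apply/idP/eqP => [|->]; last by rewrite /cnorm2 mul0mx mxE.
rewrite cnorm2E psumr_eq0 => [/allP u0|j _]; last exact: mulcJ_ge0.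
apply/matrixP => i j; rewrite mxE ord1.
have /implyP/(_ isT) := u0 j (mem_index_enum j).
by rewrite mulf_eq0 conjc_eq0 orbb => /eqP.
Qed.

Lemma ceigenvalue_gram m n (A : 'M[R]_(m, n)) z :
  ceigenvalue (A *m A^T) z -> exists2 r, z = r%:C & 0 <= r.
Proof.
rewrite /ceigenvalue map_mxM -map_trmx; set Ac := map_mx _ A.
move=> /eigenvalueP [w Hw w0].
have conj_Ac : map_mx conjc Ac = Ac by apply/matrixP => i j; rewrite !mxE conjc_real.
have zw : z * cnorm2 w = cnorm2 (w *m Ac).
  rewrite /cnorm2; transitivity ((z *: (w *m (map_mx conjc w)^T)) 0 0).
    by rewrite [RHS]mxE.
  by rewrite scalemxAl -Hw map_mxM conj_Ac trmx_mul !mulmxA.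
have : 0 <= z.
  have nw0 : cnorm2 w != 0 by rewrite cnorm2_eq0.
  by rewrite -(mulfK nw0 z) zw divr_ge0 ?cnorm2_ge0.
by case: z {Hw zw} => a b; rewrite lecE /= => /andP [/eqP -> a0]; exists a.
Qed.

Lemma mxtrace_gram_eq0 m n (A : 'M[R]_(m, n)) : \tr (A *m A^T) = 0 -> A = 0.
Proof.
have trE : \tr (A *m A^T) = \sum_i \sum_j A i j ^+ 2.
  by apply: eq_bigr => i _; rewrite mxE; apply: eq_bigr => j _; rewrite mxE expr2.
rewrite trE => /eqP; rewrite psumr_eq0 => [/allP A0|i _]; last first.
  by apply: sumr_ge0 => j _; apply: sqr_ge0.
apply/matrixP => i j; rewrite mxE; apply/eqP; rewrite -sqrf_eq0.
have /implyP/(_ isT) := A0 i (mem_index_enum i); rewrite psumr_eq0 => [/allP Ai0|k _].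
  by have /implyP/(_ isT) := Ai0 j (mem_index_enum j).
exact: sqr_ge0.
Qed.

Lemma gram_pos_eigenvalue m n (A : 'M[R]_(m, n)) :
  A != 0 -> exists2 r, eigenvalue (A *m A^T) r & 0 < r.
Proof.
move=> A0; set S := map_mx (real_complex R) (A *m A^T).
have [s Hs] := closed_field_poly_normal (char_poly S).
rewrite (monicP (char_poly_monic S)) scale1r in Hs.
have sum_ne0 : \sum_(z <- s) z != 0.
  rewrite -(mxtrace_char_poly_roots Hs) trace_map_mx fmorph_eq0.
  by apply: contraNneq A0 => /mxtrace_gram_eq0 ->.
have /hasP [z zs z0] : has (predC1 0) s.
  apply: contraTT sum_ne0 => /hasPn s0; rewrite negbK big1_seq // => z /andP [_].
  by move/s0; rewrite negbK => /eqP.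
have Sz : ceigenvalue (A *m A^T) z.
  by rewrite /ceigenvalue eigenvalue_root_char Hs root_prod_XsubC.
have [r zr r0] := ceigenvalue_gram Sz.
exists r; first by rewrite -ceigenvalue_real -zr.
by rewrite lt_def r0 andbT; apply: contraNneq z0 => r0'; rewrite zr r0' rmorph0.
Qed.

Definition rnorm2 n (u : 'rV[R]_n) : R := (u *m u^T) 0 0.

Lemma rnorm2_gt0 n (u : 'rV[R]_n) : u != 0 -> 0 < rnorm2 u.
Proof.
move=> u0; have uE : rnorm2 u = \sum_j u 0 j ^+ 2.
  by rewrite /rnorm2 !mxE; apply: eq_bigr => j _; rewrite !mxE expr2.
rewrite uE lt_def sumr_ge0 ?andbT => [|j _]; last exact: sqr_ge0.
apply: contraNneq u0 => /eqP; rewrite psumr_eq0 => [/allP u0|j _]; last exact: sqr_ge0.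
apply/eqP/matrixP => i j; rewrite mxE ord1; apply/eqP; rewrite -sqrf_eq0.
by have /implyP/(_ isT) := u0 j (mem_index_enum j).
Qed.

(* [v C] holds the coordinates of the orthogonal projection of [v A2^T] onto the
   range of [A1]; full rank of [[A1 A2]] makes this projection shorter than [v A2^T],
   whose norm is that of [v]. *)
Lemma eigenvalue_cross_gram_lt1 m n1 n2
    (A1 : 'M[R]_(m, n1)) (A2 : 'M[R]_(m, n2)) r :
  \rank (row_mx A1 A2) = (n1 + n2)%N ->
  A1^T *m A1 = 1%:M -> A2^T *m A2 = 1%:M ->
  eigenvalue ((A2^T *m A1) *m (A2^T *m A1)^T) r -> r < 1.
Proof.
move=> rankA orth1 orth2 /eigenvalueP [v Hv v0].
set C := A2^T *m A1 in Hv; set u := v *m A2^T; set p := v *m C.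
have pE : p = u *m A1 by rewrite /p /C mulmxA.
have vp : r * rnorm2 v = rnorm2 p.
  rewrite /rnorm2; transitivity ((r *: (v *m v^T)) 0 0); first by rewrite [RHS]mxE.
  by rewrite scalemxAl -Hv /p [(v *m C)^T]trmx_mul !mulmxA.
have uv : rnorm2 u = rnorm2 v.
  by rewrite /rnorm2 /u trmx_mul trmxK -mulmxA [A2^T *m (A2 *m _)]mulmxA orth2 mul1mx.
set e := u - p *m A1^T.
have ep : rnorm2 e = rnorm2 u - rnorm2 p.
  have h1 : u *m (p *m A1^T)^T = p *m p^T by rewrite trmx_mul trmxK mulmxA -pE.
  have h2 : p *m A1^T *m u^T = p *m p^T by rewrite -mulmxA -trmx_mul -pE.
  have h3 : p *m A1^T *m (p *m A1^T)^T = p *m p^T.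
    by rewrite trmx_mul trmxK mulmxA -[p *m A1^T *m A1]mulmxA orth1 mulmx1.
  rewrite /rnorm2 /e linearB /= mulmxBl !mulmxBr h1 h2 h3 subrr subr0.
  by rewrite mxE [X in _ + X]mxE.
have e0 : e != 0.
  have eA : e = row_mx (- p) v *m (row_mx A1 A2)^T.
    by rewrite tr_row_mx mul_row_col mulNmx addrC.
  have free : row_free (row_mx A1 A2)^T by rewrite /row_free mxrank_tr rankA.
  by rewrite eA (mulmx_free_eq0 _ free) row_mx_eq0 negb_and v0 orbT.
have := rnorm2_gt0 e0; have := rnorm2_gt0 v0.
rewrite ep uv -vp; nra.
Qed.

End Gram.

Lemma quadratic_root_on_circle (R : realFieldType) (a b k q : R) :
  0 < k -> 0 <= q -> q <= 4 * k ->
  (a + k) ^+ 2 - b ^+ 2 = q * a -> 2 * (a + k) * b = q * b ->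
  a ^+ 2 + b ^+ 2 = k ^+ 2.
Proof.
move=> k0 q0 q4 hRe hIm; have [b0|b0] := eqVneq b 0; last first.
  have h : 2 * (a + k) = q by apply: (mulIf b0); rewrite hIm.
  nra.
move: hRe; rewrite b0 expr0n /= subr0 addr0 => hRe.
have sq : (2 * a + 2 * k - q) ^+ 2 = q * (q - 4 * k) by nra.
have : (2 * a + 2 * k - q) ^+ 2 = 0.
  by apply/le_anti; rewrite sqr_ge0 sq andbT; nra.
move/eqP; rewrite sqrf_eq0 => /eqP h; have : q * (q - 4 * k) = 0 by rewrite -sq h expr0n.
nra.
Qed.

Lemma gd_opt_step (R : realType) (l : R) : 0 < l -> l < 1 ->
  let w := 2 / (1 + Num.sqrt (1 - l)) in
  [/\ 1 < w, w < 2, w ^+ 2 * l = 4 * (w - 1) & w - 1 < l].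
Proof.
move=> l0 l1; set s := Num.sqrt (1 - l) => w.
have s0 : 0 < s by rewrite sqrtr_gt0 subr_gt0.
have lE : l = 1 - s ^+ 2 by rewrite sqr_sqrtr ?subr_ge0 ?ltW //; ring.
have s1 : s < 1 by move: lE; nra.
have s10 : 1 + s != 0 by rewrite gt_eqF //; lra.
have w1E : w - 1 = (1 - s) / (1 + s) by rewrite /w; field.
split.
- by rewrite -subr_gt0 w1E divr_gt0 //; lra.
- have -> : w = 2 - 2 * s / (1 + s) by rewrite /w; field.
  by rewrite gtrBl divr_gt0 //; lra.
- by rewrite /w lE; field.
- rewrite -subr_gt0 (_ : l - (w - 1) = (1 - s) * s * (2 + s) / (1 + s)).
    by rewrite divr_gt0 ?mulr_gt0 //; lra.
  by rewrite w1E lE; field.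
Qed.

Section GdRoots.
Variable R : realType.
Local Open Scope complex_scope.

Lemma real_complex_gd_root (x g nu : R) :
  (x + g - 1) ^+ 2 = g ^+ 2 * x * nu ->
  (x%:C + g%:C - 1) ^+ 2 = g%:C ^+ 2 * x%:C * nu%:C.
Proof.
move/(congr1 (real_complex R)).
by rewrite !(rmorphXn, rmorphM, rmorphD, rmorphN, rmorph1).
Qed.

Lemma gd_disc_ge (l w g : R) : 0 < w -> w < 2 -> w ^+ 2 * l = 4 * (w - 1) ->
  g <= w -> (w - g) ^+ 2 * l <= g ^+ 2 * l - 4 * (g - 1).
Proof.
move=> w0 w2 wl gw.
have e : w * (g ^+ 2 * l - 4 * (g - 1) - (w - g) ^+ 2 * l) = 4 * (w - g) * (2 - w).
  transitivity ((2 * g - w) * (w ^+ 2 * l) - 4 * g * w + 4 * w); first by ring.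
  by rewrite wl; ring.
by rewrite -subr_ge0 -(pmulr_rge0 _ w0) e !mulr_ge0 //; lra.
Qed.

(* If [D := g^2 l - 4 (g - 1) >= 0], take [z = mu^2] with [mu] the larger root of
   [mu^2 - g sqrt(l) mu + g - 1 = 0]; if [D < 0], the roots are complex conjugate
   of modulus [g - 1], and [gd_disc_ge] forces [g > w]. *)
Lemma gd_root_large (l w g : R) :
  0 < l -> 1 < w -> w < 2 -> w ^+ 2 * l = 4 * (w - 1) -> 0 < g ->
  exists z : R[i], (z + g%:C - 1) ^+ 2 = g%:C ^+ 2 * z * l%:C /\ w - 1 <= cmod z.
Proof.
move=> l0 w1 w2 wl g0; have w0 : 0 < w by lra.
set D := g ^+ 2 * l - 4 * (g - 1).
have [D0|D0] := leP 0 D.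
  set t := Num.sqrt l; have tt : t ^+ 2 = l by rewrite sqr_sqrtr ?ltW.
  have t0 : 0 <= t by apply: sqrtr_ge0.
  have s0 : 0 <= Num.sqrt D by apply: sqrtr_ge0.
  set mu := (g * t + Num.sqrt D) / 2.
  have mu_root : mu ^+ 2 + g - 1 = g * t * mu.
    have : (mu ^+ 2 + g - 1 - g * t * mu) * 4 = Num.sqrt D ^+ 2 - D.
      by rewrite /mu /D -tt; field.
    rewrite sqr_sqrtr // subrr => /eqP; rewrite mulf_eq0 pnatr_eq0 orbF subr_eq0.
    by move/eqP.
  have mu_ge : w * t / 2 <= mu.
    have [gw|wg] := leP g w; last by rewrite /mu; nra.
    have : (w - g) * t <= Num.sqrt D.
      have := gd_disc_ge w0 w2 wl gw.
      by rewrite -ler_sqrt // sqrtrM ?sqr_ge0 // sqrtr_sqr ger0_norm ?subr_ge0.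
    rewrite /mu; lra.
  exists (mu ^+ 2)%:C; split.
    by apply: real_complex_gd_root; rewrite mu_root -tt; ring.
  rewrite cmod_real ger0_norm ?sqr_ge0 //.
  have -> : w - 1 = (w * t / 2) ^+ 2 by rewrite expr_div_n exprMn tt wl; field.
  have wt0 : 0 <= w * t / 2 by apply: divr_ge0 => //; apply: mulr_ge0; lra.
  nra.
have gw : w <= g.
  rewrite leNgt; apply/negP => gw; have := gd_disc_ge w0 w2 wl (ltW gw).
  have : 0 <= (w - g) ^+ 2 * l by rewrite mulr_ge0 ?sqr_ge0 ?ltW.
  rewrite -/D; lra.
set b := g ^+ 2 * l - 2 * (g - 1).
have bD : 4 * (g - 1) ^+ 2 - b ^+ 2 = - D * (g ^+ 2 * l) by rewrite /b /D; ring.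
set q := Num.sqrt (4 * (g - 1) ^+ 2 - b ^+ 2).
have qq : q * q = 4 * (g - 1) ^+ 2 - b ^+ 2.
  by rewrite -expr2 sqr_sqrtr // bD mulr_ge0 ?oppr_ge0 ?ltW // mulr_gt0 ?exprn_gt0.
exists (b / 2 +i* (q / 2)); split.
  rewrite !expr2 /=; congr (_ +i* _); rewrite /b in qq *; nra.
rewrite /cmod (_ : _ + _ = (g - 1) ^+ 2).
  by rewrite sqrtr_sqr ger0_norm; lra.
by rewrite !expr_div_n [q ^+ 2]expr2 qq; field.
Qed.

Lemma cmod_gd_root_opt (l w nu : R) (z : R[i]) :
  1 < w -> w ^+ 2 * l = 4 * (w - 1) -> 0 <= nu -> nu <= l ->
  (z + w%:C - 1) ^+ 2 = w%:C ^+ 2 * z * nu%:C -> cmod z = w - 1.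
Proof.
move=> w1 wl nu0 nul; case: z => a b; rewrite !expr2.
move=> /(congr1 (fun z => (complex.Re z, complex.Im z))) /= [hRe hIm].
have q0 : 0 <= w ^+ 2 * nu by rewrite mulr_ge0 ?sqr_ge0.
have q4 : w ^+ 2 * nu <= 4 * (w - 1) by rewrite -wl ler_wpM2l ?sqr_ge0.
have w10 : 0 < w - 1 by rewrite subr_gt0.
rewrite (quadratic_root_on_circle w10 q0 q4); [by rewrite sqrtr_sqr gtr0_norm|nra|nra].
Qed.

End GdRoots.

Lemma gd_iter_mxE (R : realType) n1 n2 (C : 'M[R]_(n2, n1)) g1 g2 :
  gd_iter_mx C g1 g2 = gd_mx C g1 g2.
Proof. by []. Qed.

Section GdSpectrum.
Variables (R : realType) (n1 n2 : nat) (C : 'M[R]_(n2, n1)) (l w : R).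
Hypotheses (Cl : eigenvalue (C *m C^T) l) (l_gt0 : 0 < l).
Hypothesis l_max : forall r, eigenvalue (C *m C^T) r -> r <= l.
Hypotheses (w_gt1 : 1 < w) (w_lt2 : w < 2) (wl : w ^+ 2 * l = 4 * (w - 1)).
Local Open Scope complex_scope.

Lemma ceigenvalue_gd_1 : ceigenvalue (gd_iter_mx C 1 1) l%:C.
Proof.
have l0 := lt0r_neq0 l_gt0; have [x x0 Cx] := gram_eigenvector Cl l0.
rewrite ceigenvalue_real gd_iter_mxE; apply: (eigenvalue_gd_mx x0 Cx) => //.
  exact: oner_neq0.
by rewrite addrK expr1n mul1r expr2.
Qed.

Lemma ceigenvalue_gd_large g : 0 < g ->
  exists2 z, ceigenvalue (gd_iter_mx C g g) z & w - 1 <= cmod z.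
Proof.
move=> g0; have [z [zroot zw]] := gd_root_large l_gt0 w_gt1 w_lt2 wl g0.
have [x x0 Cx] := gram_eigenvector Cl (lt0r_neq0 l_gt0).
exists z => //; rewrite /ceigenvalue gd_iter_mxE map_gd_mx.
apply: (eigenvalue_gd_mx (x := map_mx (real_complex R) x) (nu := l%:C)) => //.
- by rewrite map_mx_eq0.
- transitivity (map_mx (real_complex R) (x *m C^T *m C)).
    by rewrite !map_mxM map_trmx.
  by rewrite Cx map_mxZ.
- by rewrite fmorph_eq0 lt0r_neq0.
- apply: contraTneq zw => ->; rewrite -(rmorph0 (real_complex R)) cmod_real normr0.
  by rewrite -ltNge subr_gt0.
- by rewrite fmorph_eq0 lt0r_neq0.
Qed.

Lemma spectral_radius_gd_ge g : 0 < g -> w - 1 <= spectral_radius (gd_iter_mx C g g).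
Proof.
move=> /ceigenvalue_gd_large [z Mz zw].
exact: le_trans zw (proj2 (spectral_radius_is_max Mz) _ Mz).
Qed.

Lemma cmod_ceigenvalue_gd_opt z : ceigenvalue (gd_iter_mx C w w) z -> cmod z <= w - 1.
Proof.
have w10 : 0 < w - 1 by rewrite subr_gt0.
rewrite /ceigenvalue gd_iter_mxE map_gd_mx => Mz.
have [->|z0] := eqVneq z 0.
  by rewrite -(rmorph0 (real_complex R)) cmod_real normr0 ltW.
have [/eqP|zw] := eqVneq (z + w%:C - 1) 0.
  rewrite -addrA addr_eq0 => /eqP ->.
  rewrite (_ : - _ = (1 - w)%:C); last by rewrite rmorphB rmorph1 opprB.
  by rewrite cmod_real ler0_norm ?opprB // subr_le0 ltW.
have wC0 : w%:C != 0 by rewrite fmorph_eq0 gt_eqF // (lt_trans ltr01).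
have [x x0 Cx] := gd_mx_eigenvector Mz wC0 z0 zw.
set nu := _ / _ in Cx.
have nu0 : nu != 0 by rewrite mulf_neq0 ?invr_eq0 ?expf_neq0 ?mulf_neq0.
have CCnu : ceigenvalue (C *m C^T) nu.
  by rewrite /ceigenvalue map_mxM -map_trmx (gram_eigenvalue x0 Cx nu0).
have [r nuE r0] := ceigenvalue_gram CCnu.
have rl : r <= l by apply: l_max; rewrite -ceigenvalue_real -nuE.
rewrite (cmod_gd_root_opt w_gt1 wl r0 rl) // -nuE /nu.
by field; rewrite z0 wC0.
Qed.

Lemma spectral_radius_gd_opt : spectral_radius (gd_iter_mx C w w) = w - 1.
Proof.
have w0 : 0 < w by rewrite (lt_trans ltr01).
have [z Mz _] := ceigenvalue_gd_large w0.
have [[z' Mz' rhoE] _] := spectral_radius_is_max Mz.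
apply/le_anti; rewrite spectral_radius_gd_ge // andbT rhoE.
exact: cmod_ceigenvalue_gd_opt.
Qed.

End GdSpectrum.

Theorem mainTheorem10 (R : realType) (m n1 n2 : nat)
  (A1 : 'M[R]_(m, n1)) (A2 : 'M[R]_(m, n2)) :
  \rank (row_mx A1 A2) = (n1 + n2)%N ->
  A1^T *m A1 = 1%:M ->
  A2^T *m A2 = 1%:M ->
  A2^T *m A1 != 0 ->
  let C := A2^T *m A1 in
  let gs := 2 / (1 + Num.sqrt (1 - lambda_max (C *m C^T))) in
  gs - 1 < spectral_radius (gd_iter_mx C 1 1) /\
  (forall g : R, 0 < g ->
     spectral_radius (gd_iter_mx C gs gs) <= spectral_radius (gd_iter_mx C g g)) /\
  spectral_radius (gd_iter_mx C gs gs) = gs - 1.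
Proof.
move=> rankA orth1 orth2 C0 C gs.
have [r Cr r0] := gram_pos_eigenvalue C0.
have [Cl l_max] := lambda_max_is_max Cr.
have l_gt0 := lt_le_trans r0 (l_max _ Cr).
have l_lt1 := eigenvalue_cross_gram_lt1 rankA orth1 orth2 Cl.
have [gs_gt1 gs_lt2 gs_l gs_lt] : [/\ 1 < gs, gs < 2,
    gs ^+ 2 * lambda_max (C *m C^T) = 4 * (gs - 1) & gs - 1 < lambda_max (C *m C^T)].
  exact: gd_opt_step.
have rho_opt := spectral_radius_gd_opt Cl l_gt0 l_max gs_gt1 gs_lt2 gs_l.
split.
  have M11 := ceigenvalue_gd_1 Cl l_gt0.
  apply: lt_le_trans (proj2 (spectral_radius_is_max M11) _ M11).
  by rewrite cmod_real gtr0_norm.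
split=> [g g0|]; last exact: rho_opt.
by rewrite rho_opt (spectral_radius_gd_ge Cl l_gt0 gs_gt1 gs_lt2 gs_l g0).
Qed.
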